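(* Fix integers $K,M,N\ge 1$ and constants $P_c>0$, $P_{\max}>0$. Let $(\tilde{\mathbf{H}}(n))_{n\ge1}$ be an arbitrary sequence of block-diagonal matrices $\tilde{\mathbf{H}}(n)=\operatorname{diag}(\tilde{\mathbf{H}}_1(n),\dots,\tilde{\mathbf{H}}_K(n))$ with $\tilde{\mathbf{H}}_k(n)\in\mathbb{C}^{N\times M}$, and suppose the induced gradients satisfy $\|\mathbf{V}(n)\|\le V_0$ for all $n$ and some constant $V_0>0$ (notation as in the context). Let $(\gamma_n)_{n\ge1}$ be a nonincreasing sequence of positive step-sizes with $\gamma_n\to0$ and $n\gamma_n\to\infty$, and let $\mathbf{X}(n)$ be generated by the online gradient ascent recursion $\mathbf{X}(n+1)=\boldsymbol{\Pi}(\mathbf{X}(n)+\gamma_n\mathbf{V}(n))$ from an initial point $\mathbf{X}(1)\in\mathcal{X}$, with transmit policy $\mathbf{Q}(n)=\mathbf{Q}(\mathbf{X}(n))$. Then the policy $\mathbf{Q}(n)$ leads to no regret, i.e. $\limsup_{T\to\infty}T^{-1}\mathrm{Reg}(T)\le0$; specifically, for all $T\ge1$, $$\mathrm{Reg}(T)\le \frac{1}{\gamma_T}+\frac12 V_0^2\sum_{n=1}^T\gamma_n,$$ and, for the step-size sequence $\gamma_n=\gamma n^{-1/2}$ with $\gamma>0$, $$\mathrm{Reg}(T)\le\frac{1+\gamma^2V_0^2}{\gamma}\sqrt{T}.$$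
   Context: All matrices are complex; $\mathbf{A}^\dagger$ is the conjugate transpose and $\|\mathbf{A}\|=\operatorname{tr}(\mathbf{A}^\dagger\mathbf{A})^{1/2}$ the Frobenius norm. The effective channel matrices $\tilde{\mathbf{H}}(n)$ are assumed uniformly bounded in $n$. Feasible transmit set: $\mathcal{Q}=\{\mathbf{Q}=\operatorname{diag}(\mathbf{Q}_1,\dots,\mathbf{Q}_K):\mathbf{Q}_k\in\mathbb{C}^{M\times M}\text{ Hermitian},\ \mathbf{Q}_k\succeq0,\ \sum_k\operatorname{tr}\mathbf{Q}_k\le P_{\max}\}$. Energy efficiency at stage $n$: $\mathrm{EE}(\mathbf{Q};n)=\dfrac{\log\det(\mathbf{I}+\tilde{\mathbf{H}}(n)\mathbf{Q}\tilde{\mathbf{H}}(n)^\dagger)}{P_c+\operatorname{tr}\mathbf{Q}}$, with rate $R_n(\mathbf{Q})=\log\det(\mathbf{I}+\tilde{\mathbf{H}}(n)\mathbf{Q}\tilde{\mathbf{H}}(n)^\dagger)$. Normalized set: $\mathcal{X}=\{\mathbf{X}=\operatorname{diag}(\mathbf{X}_1,\dots,\mathbf{X}_K):\mathbf{X}_k\in\mathbb{C}^{M\times M}\text{ Hermitian},\ \mathbf{X}_k\succeq0,\ \sum_k\operatorname{tr}\mathbf{X}_k\le1\}$, with the bijection $\mathbf{Q}(\mathbf{X})=\dfrac{P_cP_{\max}}{P_c+P_{\max}(1-\operatorname{tr}\mathbf{X})}\mathbf{X}$ onto $\mathcal{Q}$. Utility: $u(\mathbf{X};n)=\mathrm{EE}(\mathbf{Q}(\mathbf{X});n)=\dfrac{P_c+P_{\max}(1-\operatorname{tr}\mathbf{X})}{P_c(P_c+P_{\max})}\log\det\Big(\mathbf{I}+\dfrac{P_cP_{\max}\tilde{\mathbf{H}}(n)\mathbf{X}\tilde{\mathbf{H}}(n)^\dagger}{P_c+P_{\max}(1-\operatorname{tr}\mathbf{X})}\Big)$.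 Gradient: $\mathbf{V}(n)=\nabla_{\mathbf{X}}u(\mathbf{X}(n);n)=\dfrac{P_{\max}}{P_c+P_{\max}}\Big[\mathbf{A}_n+\dfrac{\operatorname{tr}(\mathbf{A}_n\mathbf{Q}(n))-R_n(\mathbf{Q}(n))}{P_c}\mathbf{I}\Big]$ where $\mathbf{A}_n=\tilde{\mathbf{H}}(n)^\dagger[\mathbf{I}+\tilde{\mathbf{H}}(n)\mathbf{Q}(n)\tilde{\mathbf{H}}(n)^\dagger]^{-1}\tilde{\mathbf{H}}(n)$ and $\mathbf{Q}(n)=\mathbf{Q}(\mathbf{X}(n))$. Projection: $\boldsymbol{\Pi}(\mathbf{Y})=\arg\min_{\mathbf{X}\in\mathcal{X}}\|\mathbf{X}-\mathbf{Y}\|^2$. Regret: $\mathrm{Reg}(T)=\max_{\mathbf{Q}\in\mathcal{Q}}\sum_{n=1}^T[\mathrm{EE}(\mathbf{Q};n)-\mathrm{EE}(\mathbf{Q}(n);n)]$; a policy leads to no regret if $\limsup_{T\to\infty}T^{-1}\mathrm{Reg}(T)\le0$. *)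

From HB Require Import structures.
From mathcomp Require Import all_boot all_order all_algebra.
From mathcomp Require Import all_classical all_reals all_analysis.
From mathcomp Require Import complex.
Set Implicit Arguments. Unset Strict Implicit. Unset Printing Implicit Defensive.
Import Order.TTheory GRing.Theory Num.Theory.
Local Open Scope ring_scope.

Section Defs.
Variable R : realType.
Local Notation C := R[i].

Definition adj {m n : nat} (A : 'M[C]_(m, n)) : 'M[C]_(n, m) :=
  (map_mx (@conjc R) A)^T.

Definition frob {m n : nat} (A : 'M[C]_(m, n)) : R :=
  Num.sqrt (complex.Re (\tr (adj A *m A))).

Definition blockdiag (K p q : nat) (A : 'M[C]_(K * p, K * q)) : Prop :=
  forall (i : 'I_(K * p)) (j : 'I_(K * q)),
    (i %/ p)%N != (j %/ q)%N -> A i j = 0.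

Definition hermitian {m : nat} (A : 'M[C]_m) : Prop := adj A = A.

(* positive semidefinite: v^dagger A v is real and >= 0 for all v *)
Definition psd {m : nat} (A : 'M[C]_m) : Prop :=
  forall v : 'cV[C]_m, 0 <= (adj v *m A *m v) ord0 ord0.

Definition Qset (K M : nat) (Pmax : R) (Q : 'M[C]_(K * M)) : Prop :=
  blockdiag Q /\ hermitian Q /\ psd Q /\ complex.Re (\tr Q) <= Pmax.

Definition Xset (K M : nat) (X : 'M[C]_(K * M)) : Prop :=
  blockdiag X /\ hermitian X /\ psd X /\ complex.Re (\tr X) <= 1.

Definition QofX (K M : nat) (Pc Pmax : R) (X : 'M[C]_(K * M)) : 'M[C]_(K * M) :=
  ((Pc * Pmax / (Pc + Pmax * (1 - complex.Re (\tr X))))%:C)%C *: X.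

Definition rate (K N M : nat) (H : 'M[C]_(K * N, K * M)) (Q : 'M[C]_(K * M)) : R :=
  ln (complex.Re (\det (1%:M + H *m Q *m adj H))).

Definition EE (K N M : nat) (Pc : R) (H : 'M[C]_(K * N, K * M)) (Q : 'M[C]_(K * M)) : R :=
  rate H Q / (Pc + complex.Re (\tr Q)).

Definition Amat (K N M : nat) (H : 'M[C]_(K * N, K * M)) (Q : 'M[C]_(K * M)) : 'M[C]_(K * M) :=
  adj H *m invmx (1%:M + H *m Q *m adj H) *m H.

(* gradient V(n) = grad_X u(X(n);n) *)
Definition Vgrad (K N M : nat) (Pc Pmax : R) (H : 'M[C]_(K * N, K * M))
    (X : 'M[C]_(K * M)) : 'M[C]_(K * M) :=
  let Q := QofX Pc Pmax X in
  let A := Amat H Q in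
  ((Pmax / (Pc + Pmax))%:C)%C *:
    (A + (((\tr (A *m Q) - ((rate H Q)%:C)%C) / (Pc%:C)%C)%:M)).

Definition is_proj (K M : nat) (Y Z : 'M[C]_(K * M)) : Prop :=
  Xset Z /\ forall W : 'M[C]_(K * M), Xset W -> frob (Z - Y) <= frob (W - Y).

(* Reg(T) = max_{Q in Qset} sum_{n=1}^T [EE(Q;n) - EE(Q(n);n)],
   written as a supremum (the max is attained, Qset being compact) *)
Definition Reg (K N M : nat) (Pc Pmax : R) (H : nat -> 'M[C]_(K * N, K * M))
    (Qpol : nat -> 'M[C]_(K * M)) (T : nat) : R :=
  sup [set r | exists Q : 'M[C]_(K * M), Qset Pmax Q /\
        r = \sum_(1 <= n < T.+1) (EE Pc (H n) Q - EE Pc (H n) (Qpol n))].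

End Defs.

From Pilot Require Import Defs.
From HB Require Import structures.
From mathcomp Require Import all_boot all_order all_algebra.
From mathcomp Require Import all_classical all_reals all_analysis.
From mathcomp Require Import complex ring lra.
Import Order.TTheory GRing.Theory Num.Theory.
Import numFieldNormedType.Exports.
Local Open Scope classical_set_scope.
Local Open Scope ring_scope.

Set Implicit Arguments. Unset Strict Implicit. Unset Printing Implicit Defensive.

(* The utility u(X; n) = EE(Q(X); n) is concave on the normalized set: the
   log-det rate has the tangent inequality ln det B' <= ln det B + tr(B^-1 (B' - B)),
   and the map X |-> Q(X) turns the fractional program EE into a perspective-type
   function of X, so V(n) is a supergradient of u(.; n).  Every feasible Q is Q(W)
   for some W in the normalized set, hence the regret against Q is at most
   sum_n <V(n), W - X(n)>.  Projected gradient ascent bounds this sum: the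
   projection onto a convex set is nonexpansive towards its points, so
   <V(n), W - X(n)> <= (|X(n) - W|^2 - |X(n+1) - W|^2) / (2 gamma_n) + gamma_n V0^2 / 2,
   which telescopes against the squared diameter 2 of the normalized set.
   Cesaro averaging and sum_{n <= T} n^(-1/2) <= 2 sqrt T give the two corollaries. *)

Section ConjugateTranspose.
Variable R : realType.
Local Notation C := R[i].

Lemma Re_ge0 (z : C) : 0 <= z -> 0 <= complex.Re z.
Proof. by rewrite lecE => /andP[]. Qed.

Lemma Re_realM (c : R) (z : C) : complex.Re ((c%:C)%C * z) = c * complex.Re z.
Proof. by case: z => a b /=; rewrite mul0r subr0. Qed.

Lemma Re_conjc (x : C) : complex.Re (conjc x) = complex.Re x.
Proof. by case: x. Qed.

Lemma Re_divr_real (x : C) (c : R) : complex.Re (x / (c%:C)%C) = complex.Re x / c.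
Proof. by rewrite -fmorphV mulrC Re_realM mulrC. Qed.

Lemma adjE m n (A : 'M[C]_(m, n)) i j : adj A i j = conjc (A j i).
Proof. by rewrite /adj !mxE. Qed.

Lemma adjK m n (A : 'M[C]_(m, n)) : adj (adj A) = A.
Proof. by apply/matrixP => i j; rewrite !adjE conjcK. Qed.

Lemma adjM m n p (A : 'M[C]_(m, n)) (B : 'M[C]_(n, p)) :
  adj (A *m B) = adj B *m adj A.
Proof.
apply/matrixP => i j; rewrite adjE !mxE rmorph_sum; apply: eq_bigr => k _.
by rewrite rmorphM !adjE mulrC.
Qed.

Lemma adjD m n (A B : 'M[C]_(m, n)) : adj (A + B) = adj A + adj B.
Proof. by apply/matrixP => i j; rewrite /adj !mxE rmorphD. Qed.

Lemma adjN m n (A : 'M[C]_(m, n)) : adj (- A) = - adj A.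
Proof. by apply/matrixP => i j; rewrite /adj !mxE rmorphN. Qed.

Lemma adjB m n (A B : 'M[C]_(m, n)) : adj (A - B) = adj A - adj B.
Proof. by rewrite adjD adjN. Qed.

Lemma adjZ m n (a : C) (A : 'M[C]_(m, n)) : adj (a *: A) = conjc a *: adj A.
Proof. by apply/matrixP => i j; rewrite /adj !mxE rmorphM. Qed.

Lemma adj_realZ m n (c : R) (A : 'M[C]_(m, n)) : adj ((c%:C)%C *: A) = (c%:C)%C *: adj A.
Proof. by rewrite adjZ conjc_real. Qed.

Lemma adj_scalar n (a : C) : adj (a%:M : 'M[C]_n) = (conjc a)%:M.
Proof. by apply/matrixP => i j; rewrite /adj !mxE eq_sym rmorphMn. Qed.

Lemma adj1 n : adj (1%:M : 'M[C]_n) = 1%:M.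
Proof. by rewrite adj_scalar rmorph1. Qed.

Lemma adj_trC n (P : 'M[C]_n) : (P ^t Num.conj)%sesqui = adj P.
Proof. by rewrite /adj map_trmx. Qed.

Lemma mxtrace_adj n (A : 'M[C]_n) : \tr (adj A) = conjc (\tr A).
Proof.
by rewrite /adj mxtrace_tr /mxtrace rmorph_sum; apply: eq_bigr => i _; rewrite mxE.
Qed.

Lemma adj_diag_real n (f : 'I_n -> R) :
  adj (diag_mx (\row_k ((f k)%:C)%C)) = diag_mx (\row_k ((f k)%:C)%C).
Proof.
apply/matrixP => i j; rewrite adjE !mxE.
by have [->|_] := eqVneq i j; rewrite ?mulr1n ?conjc_real // !mulr0n rmorph0.
Qed.

End ConjugateTranspose.

Section FrobeniusProduct.
Variable R : realType.
Local Notation C := R[i].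

Definition frobdot m n (A B : 'M[C]_(m, n)) : R := complex.Re (\tr (adj A *m B)).

Lemma mxtrace_adjM m n (A B : 'M[C]_(m, n)) :
  \tr (adj A *m B) = \sum_i \sum_j conjc (A i j) * B i j.
Proof.
rewrite /mxtrace exchange_big /=; apply: eq_bigr => i _.
by rewrite mxE; apply: eq_bigr => j _; rewrite adjE.
Qed.

Lemma mxtrace_adjMself_ge0 m n (A : 'M[C]_(m, n)) : 0 <= \tr (adj A *m A).
Proof.
rewrite mxtrace_adjM; apply: sumr_ge0 => i _; apply: sumr_ge0 => j _.
by rewrite mulrC mulcJ_ge0.
Qed.

Lemma frobdot_ge0 m n (A : 'M[C]_(m, n)) : 0 <= frobdot A A.
Proof. exact/Re_ge0/mxtrace_adjMself_ge0. Qed.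

Lemma frob_ge0 m n (A : 'M[C]_(m, n)) : 0 <= frob A.
Proof. exact: sqrtr_ge0. Qed.

Lemma sqr_frob m n (A : 'M[C]_(m, n)) : frob A ^+ 2 = frobdot A A.
Proof. by rewrite /frob sqr_sqrtr // frobdot_ge0. Qed.

Lemma frob_le_frobdot m n (A B : 'M[C]_(m, n)) :
  frob A <= frob B -> frobdot A A <= frobdot B B.
Proof. by move=> h; rewrite -!sqr_frob lerXn2r ?nnegrE ?frob_ge0. Qed.

Lemma frobdotDr m n (A B B' : 'M[C]_(m, n)) :
  frobdot A (B + B') = frobdot A B + frobdot A B'.
Proof. by rewrite /frobdot mulmxDr mxtraceD raddfD. Qed.

Lemma frobdotDl m n (A A' B : 'M[C]_(m, n)) :
  frobdot (A + A') B = frobdot A B + frobdot A' B.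
Proof. by rewrite /frobdot adjD mulmxDl mxtraceD raddfD. Qed.

Lemma frobdotNr m n (A B : 'M[C]_(m, n)) : frobdot A (- B) = - frobdot A B.
Proof. by rewrite /frobdot mulmxN linearN raddfN. Qed.

Lemma frobdotNl m n (A B : 'M[C]_(m, n)) : frobdot (- A) B = - frobdot A B.
Proof. by rewrite /frobdot adjN mulNmx linearN raddfN. Qed.

Lemma frobdotBr m n (A B B' : 'M[C]_(m, n)) :
  frobdot A (B - B') = frobdot A B - frobdot A B'.
Proof. by rewrite frobdotDr frobdotNr. Qed.

Lemma frobdotBl m n (A A' B : 'M[C]_(m, n)) :
  frobdot (A - A') B = frobdot A B - frobdot A' B.
Proof. by rewrite frobdotDl frobdotNl. Qed.

Lemma frobdotZr m n (c : R) (A B : 'M[C]_(m, n)) :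
  frobdot A ((c%:C)%C *: B) = c * frobdot A B.
Proof. by rewrite /frobdot -scalemxAr mxtraceZ Re_realM. Qed.

Lemma frobdotZl m n (c : R) (A B : 'M[C]_(m, n)) :
  frobdot ((c%:C)%C *: A) B = c * frobdot A B.
Proof. by rewrite /frobdot adj_realZ -scalemxAl mxtraceZ Re_realM. Qed.

Lemma frobdotC m n (A B : 'M[C]_(m, n)) : frobdot A B = frobdot B A.
Proof. by rewrite /frobdot -Re_conjc -mxtrace_adj adjM adjK. Qed.

Lemma frobdot_sqrD m n (U V : 'M[C]_(m, n)) :
  frobdot (U + V) (U + V) = frobdot U U + 2 * frobdot U V + frobdot V V.
Proof. by rewrite !frobdotDl !frobdotDr (frobdotC V U); ring. Qed.

Lemma Re_trB n (U V : 'M[C]_n) :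
  complex.Re (\tr (U - V)) = complex.Re (\tr U) - complex.Re (\tr V).
Proof. by rewrite mxtraceD linearN raddfB. Qed.

Lemma Re_tr_realZr n (A U : 'M[C]_n) (c : R) :
  complex.Re (\tr (A *m ((c%:C)%C *: U))) = c * complex.Re (\tr (A *m U)).
Proof. by rewrite -scalemxAr mxtraceZ Re_realM. Qed.

Lemma frobdotNN m n (A B : 'M[C]_(m, n)) : frobdot (- A) (- B) = frobdot A B.
Proof. by rewrite frobdotNl frobdotNr opprK. Qed.

Lemma frobdot_hermr n (A Z : 'M[C]_n) : adj Z = Z ->
  frobdot A Z = complex.Re (\tr (A *m Z)).
Proof. by move=> hZ; rewrite /frobdot -Re_conjc -mxtrace_adj adjM adjK hZ mxtrace_mulC. Qed.

End FrobeniusProduct.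

Section HermitianPsd.
Variable R : realType.
Local Notation C := R[i].

Lemma psd_conj_diag m n (P : 'M[C]_(m, n)) (A : 'M[C]_n) k :
  psd A -> 0 <= (P *m A *m adj P) k k.
Proof.
move=> /(_ (adj (row k P))); rewrite adjK.
congr (_ <= _); rewrite !mxE; apply: eq_bigr => j _; congr (_ * _).
  by rewrite !mxE; apply: eq_bigr => l _; rewrite !mxE.
by rewrite !adjE mxE.
Qed.

Lemma psd_congr n m (A : 'M[C]_n) (Q : 'M[C]_(n, m)) :
  psd A -> psd (adj Q *m A *m Q).
Proof. by move=> hA v; have := hA (Q *m v); rewrite adjM !mulmxA. Qed.

Lemma psdD n (A B : 'M[C]_n) : psd A -> psd B -> psd (A + B).
Proof. by move=> hA hB v; rewrite mulmxDr mulmxDl mxE addr_ge0. Qed.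

Lemma psd1 n : psd (1%:M : 'M[C]_n).
Proof.
by move=> v; rewrite mulmx1; have := mxtrace_adjMself_ge0 v; rewrite /mxtrace big_ord1.
Qed.

Lemma psd_subr1 n (B : 'M[C]_n) : psd (B - 1%:M) -> psd B.
Proof. by move=> h; rewrite -(subrK 1%:M B); apply: psdD => //; apply: psd1. Qed.

Lemma psdZ n (c : R) (A : 'M[C]_n) : 0 <= c -> psd A -> psd ((c%:C)%C *: A).
Proof.
by move=> hc hA v; rewrite -scalemxAr -scalemxAl mxE mulr_ge0 // ler0c.
Qed.

Lemma psd_mxtrace_ge0 n (A : 'M[C]_n) : psd A -> 0 <= \tr A.
Proof.
move=> hA; apply: sumr_ge0 => k _.
by have := psd_conj_diag 1%:M k hA; rewrite adj1 mul1mx mulmx1.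
Qed.

Lemma herm_mxtrace_real n (A : 'M[C]_n) : adj A = A -> complex.Im (\tr A) = 0.
Proof.
move=> hA; rewrite raddf_sum big1 // => k _.
have := congr1 (fun M : 'M[C]_n => M k k) hA; rewrite /= adjE.
by case: (A k k) => a b /= [] h; lra.
Qed.

Lemma frobdot_scalar_hermr n (a : C) (Z : 'M[C]_n) : adj Z = Z ->
  frobdot (a%:M) Z = complex.Re a * complex.Re (\tr Z).
Proof.
move=> hZ; rewrite /frobdot adj_scalar mul_scalar_mx mxtraceZ.
have := herm_mxtrace_real hZ; case: (\tr Z) => x y /= ->.
by case: a => u v /=; rewrite !mulr0 subr0.
Qed.

Lemma herm_spectral n (A : 'M[C]_n) : adj A = A ->
  exists P : 'M[C]_n, exists d : 'rV[C]_n,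
    [/\ P *m adj P = 1%:M, adj P *m P = 1%:M & A = adj P *m diag_mx d *m P].
Proof.
move=> hA.
have nA : A \is normalmx by apply/normalmxP; rewrite adj_trC hA.
have /orthomx_spectralP eA := nA.
set P := spectralmx A in eA.
have uP : P \is unitarymx by apply: spectral_unitarymx.
have PP : P *m adj P = 1%:M by rewrite -adj_trC; apply/unitarymxP.
have iP : invmx P = adj P by rewrite -adj_trC; apply: invmx_unitary.
exists P, (spectral_diag A); split => //; last by rewrite -iP.
by rewrite -iP mulVmx // spectral_unit.
Qed.

Lemma psd_spectral n (A : 'M[C]_n) : adj A = A -> psd A ->
  exists P : 'M[C]_n, exists r : 'I_n -> R,
   [/\ P *m adj P = 1%:M, adj P *m P = 1%:M,
       A = adj P *m diag_mx (\row_k ((r k)%:C)%C) *m P & forall k, 0 <= r k].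
Proof.
move=> hA pA; have [P [d [PP PP' eA]]] := herm_spectral hA.
have dge0 k : 0 <= d ord0 k.
  have := psd_conj_diag P k pA.
  by rewrite eA !mulmxA PP mul1mx -mulmxA PP mulmx1 mxE eqxx mulr1n.
exists P, (fun k => complex.Re (d ord0 k)); split => //; last by move=> k; apply: Re_ge0.
rewrite {1}eA; congr (_ *m diag_mx _ *m _); apply/rowP => k.
by rewrite mxE RRe_real // ger0_real.
Qed.

Section UnitaryDiagonalization.
Variables (n : nat) (A P : 'M[C]_n) (r : 'I_n -> R).
Hypotheses (PP : P *m adj P = 1%:M)
  (eA : A = adj P *m diag_mx (\row_k ((r k)%:C)%C) *m P).

Lemma diagonalized_det : \det A = ((\prod_k r k)%:C)%C.
Proof.
rewrite eA !det_mulmx mulrC mulrA -det_mulmx PP det1 mul1r det_diag rmorph_prod.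
by apply: eq_bigr => k _; rewrite mxE.
Qed.

Lemma diagonalized_tr : \tr A = ((\sum_k r k)%:C)%C.
Proof.
rewrite eA mxtrace_mulC mulmxA PP mul1mx mxtrace_diag rmorph_sum.
by apply: eq_bigr => k _; rewrite mxE.
Qed.

Lemma diagonalized_trM (W : 'M[C]_n) :
  \tr (A *m W) = \sum_k ((r k)%:C)%C * (P *m W *m adj P) k k.
Proof.
rewrite eA -!mulmxA mxtrace_mulC -!mulmxA mul_diag_mx /mxtrace.
by apply: eq_bigr => k _; rewrite !mxE.
Qed.

Lemma diagonalized_conj : P *m A *m adj P = diag_mx (\row_k ((r k)%:C)%C).
Proof. by rewrite eA !mulmxA PP mul1mx -mulmxA PP mulmx1. Qed.

End UnitaryDiagonalization.

Lemma frobdot_psd_ge0 n (X W : 'M[C]_n) : adj X = X -> psd X -> psd W ->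
  0 <= frobdot X W.
Proof.
move=> hX pX pW; have [P [r [PP PP' eX rge0]]] := psd_spectral hX pX.
rewrite /frobdot hX (diagonalized_trM eX); apply: Re_ge0; apply: sumr_ge0 => k _.
by apply: mulr_ge0; [rewrite ler0c | apply: psd_conj_diag].
Qed.

Lemma frobdot_psd_le_sqr_tr n (X : 'M[C]_n) : adj X = X -> psd X ->
  frobdot X X <= complex.Re (\tr X) ^+ 2.
Proof.
move=> hX pX; have [P [r [PP PP' eX rge0]]] := psd_spectral hX pX.
rewrite /frobdot {1}hX (diagonalized_trM eX) (diagonalized_tr PP eX).
rewrite (diagonalized_conj PP eX) raddf_sum /=.
have -> : \sum_k complex.Re (((r k)%:C)%C * diag_mx (\row_k0 ((r k0)%:C)%C) k k)
   = \sum_k r k * r k.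
  by apply: eq_bigr => k _; rewrite mxE eqxx mulr1n mxE Re_realM.
rewrite expr2 mulr_suml; apply: ler_sum => k _; apply: ler_wpM2l => //.
by rewrite (bigD1 k) //= lerDl sumr_ge0.
Qed.

End HermitianPsd.

Section LogDet.
Variable R : realType.
Local Notation C := R[i].

Lemma ln_prod (I : finType) (F : I -> R) : (forall i, 0 < F i) ->
  ln (\prod_i F i) = \sum_i ln (F i).
Proof.
move=> h; pose K := fun x y : R => 0 < x /\ ln x = y.
suff [] : K (\prod_i F i) (\sum_i ln (F i)) by [].
apply: (big_rec2 K); first by split; rewrite ?ln1.
by move=> i x y _ [x0 <-]; split; [rewrite mulr_gt0 | rewrite lnM // posrE].
Qed.

Lemma ln_le_subr1 (x : R) : 0 < x -> ln x <= x - 1.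
Proof. by move=> x0; have := @le_ln1Dx R (x - 1); rewrite (addrC 1) subrK; apply; lra. Qed.

Lemma ln_det_le_tr_sub n (N : 'M[C]_n) : adj N = N -> psd N ->
  0 < complex.Re (\det N) ->
  ln (complex.Re (\det N)) <= complex.Re (\tr N) - n%:R.
Proof.
move=> hN pN; have [P [r [PP PP' eN rge0]]] := psd_spectral hN pN.
rewrite (diagonalized_det PP eN) (diagonalized_tr PP eN) /= => dpos.
have rpos k : 0 < r k.
  rewrite lt0r rge0 andbT; apply/negP => /eqP rk0.
  by move: dpos; rewrite (bigD1 k) //= rk0 mul0r ltxx.
rewrite ln_prod // -[n in n%:R]card_ord -sumr_const -sumrB.
by apply: ler_sum => k _; apply: ln_le_subr1.
Qed.

Lemma psd_ge1_spectral n (B : 'M[C]_n) : adj B = B -> psd (B - 1%:M) ->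
  exists P : 'M[C]_n, exists r : 'I_n -> R,
   [/\ P *m adj P = 1%:M, adj P *m P = 1%:M,
       B = adj P *m diag_mx (\row_k ((r k)%:C)%C) *m P & forall k, 1 <= r k].
Proof.
move=> hB pB; have [P [r [PP PP' eB rge0]]] := psd_spectral hB (psd_subr1 pB).
exists P, r; split => // k; have := psd_conj_diag P k pB.
rewrite mulmxBr mulmxBl mulmx1 PP (diagonalized_conj PP eB) !mxE eqxx !mulr1n.
by rewrite subr_ge0 -[1 : C]/((1 : R)%:C)%C lecR.
Qed.

Lemma psd_ge1_det n (B : 'M[C]_n) : adj B = B -> psd (B - 1%:M) ->
  exists2 d : R, 0 < d & \det B = (d%:C)%C.
Proof.
move=> hB pB; have [P [r [PP PP' eB rge1]]] := psd_ge1_spectral hB pB.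
exists (\prod_k r k); last exact: diagonalized_det PP eB.
by apply: prodr_gt0 => k _; apply: lt_le_trans ltr01 (rge1 k).
Qed.

Lemma psd_ge1_invsqrt n (B : 'M[C]_n) : adj B = B -> psd (B - 1%:M) ->
  B \in unitmx /\ exists Q : 'M[C]_n, Q *m adj Q = invmx B.
Proof.
move=> hB pB; have [P [r [PP PP' eB rge1]]] := psd_ge1_spectral hB pB.
have rpos k : 0 < r k by apply: lt_le_trans ltr01 (rge1 k).
pose E := diag_mx (\row_k ((Num.sqrt (r k)^-1)%:C)%C).
pose Dinv := diag_mx (\row_k (((r k)^-1)%:C)%C).
have EE : E *m E = Dinv.
  rewrite /E /Dinv mulmx_diag; congr diag_mx; apply/rowP => k; rewrite !mxE.
  by rewrite -rmorphM -expr2 sqr_sqrtr // invr_ge0 ltW.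
have BDinv : B *m (adj P *m Dinv *m P) = 1%:M.
  rewrite eB !mulmxA -(mulmxA _ P) PP mulmx1 -(mulmxA _ _ Dinv) /Dinv mulmx_diag.
  have -> : \row_j ((\row_k ((r k)%:C)%C) 0 j * (\row_k (((r k)^-1)%:C)%C) 0 j)
      = const_mx 1 :> 'rV[C]_n.
    by apply/rowP => k; rewrite !mxE -rmorphM mulfV // gt_eqF.
  by rewrite diag_const_mx mulmx1 PP'.
have [Bu _] := mulmx1_unit BDinv.
split=> //; exists (adj P *m E).
rewrite adjM adjK adj_diag_real -mulmxA (mulmxA E) EE mulmxA.
by rewrite -[LHS]mul1mx -(mulVmx Bu) -[invmx B *m B *m _]mulmxA BDinv mulmx1.
Qed.

Lemma ln_det_tangent n (B B' : 'M[C]_n) : adj B = B -> adj B' = B' ->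
  psd (B - 1%:M) -> psd (B' - 1%:M) ->
  ln (complex.Re (\det B')) <=
    ln (complex.Re (\det B)) + complex.Re (\tr (invmx B *m (B' - B))).
Proof.
move=> hB hB' pB pB'.
have [Bu [Q QQ]] := psd_ge1_invsqrt hB pB.
have [d d0 dB] := psd_ge1_det hB pB.
have [d' d0' dB'] := psd_ge1_det hB' pB'.
pose N := adj Q *m B' *m Q.
have hN : adj N = N by rewrite /N !adjM adjK hB' mulmxA.
have pN : psd N by apply/psd_congr/psd_subr1.
have dN : \det N = ((d' / d)%:C)%C.
  rewrite /N !det_mulmx mulrAC [\det (adj Q) * _]mulrC -det_mulmx QQ det_inv dB dB'.
  by rewrite -fmorphV -rmorphM mulrC.
have tN : \tr N = \tr (invmx B *m B') by rewrite /N mxtrace_mulC mulmxA QQ.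
have := ln_det_le_tr_sub hN pN; rewrite dN tN /= => /(_ (divr_gt0 d0' d0)).
rewrite dB dB' /= mulmxBr mxtraceD linearN raddfB /= mulVmx // mxtrace1.
have -> : complex.Re (n%:R : C) = n%:R by rewrite raddfMn.
by rewrite lnM ?posrE ?invr_gt0 // lnV ?posrE //; lra.
Qed.

End LogDet.

Section EnergyEfficiency.
Variable R : realType.
Local Notation C := R[i].

Lemma rate_tangent K N M (H : 'M[C]_(K * N, K * M)) (Q Q' : 'M[C]_(K * M)) :
  adj Q = Q -> psd Q -> adj Q' = Q' -> psd Q' ->
  rate H Q' <= rate H Q + complex.Re (\tr (Amat H Q *m (Q' - Q))).
Proof.
have herm_ge1 (P : 'M[C]_(K * M)) : adj P = P -> psd P ->
    adj (1%:M + H *m P *m adj H) = 1%:M + H *m P *m adj H /\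
    psd (1%:M + H *m P *m adj H - 1%:M).
  move=> hP pP; rewrite adjD adj1 !adjM adjK hP mulmxA addrAC subrr add0r.
  by split=> //; have := psd_congr (adj H) pP; rewrite adjK.
move=> hQ pQ hQ' pQ'.
have [hB pB] := herm_ge1 Q hQ pQ; have [hB' pB'] := herm_ge1 Q' hQ' pQ'.
apply: le_trans (ln_det_tangent hB hB' pB pB') _.
rewrite opprD addrACA subrr add0r -mulmxBl -mulmxBr mxtrace_mulC.
by rewrite -!mulmxA mxtrace_mulC -!mulmxA mxtrace_mulC !mulmxA.
Qed.

Definition QofX_gain (Pc Pmax s : R) := Pc * Pmax / (Pc + Pmax * (1 - s)).

Lemma QofXE K M (Pc Pmax : R) (X : 'M[C]_(K * M)) :
  QofX Pc Pmax X = ((QofX_gain Pc Pmax (complex.Re (\tr X)))%:C)%C *: X.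
Proof. by []. Qed.

Section Gain.
Variables (Pc Pmax : R).
Hypotheses (Pc_gt0 : 0 < Pc) (Pmax_gt0 : 0 < Pmax).
Local Notation gain := (QofX_gain Pc Pmax).

Lemma gain_den_gt0 s : s <= 1 -> 0 < Pc + Pmax * (1 - s).
Proof. by move=> s1; apply: ltr_pwDl => //; rewrite mulr_ge0 ?subr_ge0 // ltW. Qed.

Lemma QofX_gain_ge0 s : s <= 1 -> 0 <= gain s.
Proof. by move=> s1; rewrite divr_ge0 ?mulr_ge0 ?ltW ?gain_den_gt0. Qed.

Lemma Pc_add_gainM s : s <= 1 ->
  Pc + gain s * s = Pc * (Pc + Pmax) / (Pc + Pmax * (1 - s)).
Proof. by move=> s1; rewrite /QofX_gain; field; rewrite gt_eqF ?gain_den_gt0. Qed.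

(* [Lx], [Lw] stand for the rates at Q(X), Q(W) and [ax], [aw] for
   Re tr(A X), Re tr(A W): dividing the tangent inequality of the rate by the
   total powers yields the supergradient inequality of [u]. *)
Lemma EE_gain_tangent (s s' Lx Lw ax aw : R) : s <= 1 -> s' <= 1 ->
  Lw <= Lx + gain s' * aw - gain s * ax ->
  Lw / (Pc + gain s' * s') - Lx / (Pc + gain s * s) <=
  Pmax / (Pc + Pmax) * ((aw - ax) + (gain s * ax - Lx) / Pc * (s' - s)).
Proof.
move=> s1 s1' hL; rewrite !Pc_add_gainM //.
have t0 := gain_den_gt0 s1; have t0' := gain_den_gt0 s1'.
set t := Pc + Pmax * (1 - s) in t0 *; set t' := Pc + Pmax * (1 - s') in t0' *.
have PP0 : 0 < Pc + Pmax by rewrite addr_gt0.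
have D0 : 0 < Pc * (Pc + Pmax) by rewrite mulr_gt0.
have -> : Lw / (Pc * (Pc + Pmax) / t') = t' / (Pc * (Pc + Pmax)) * Lw.
  by field; rewrite !gt_eqF.
apply: le_trans (lerD (ler_wpM2l (ltW (divr_gt0 t0' D0)) hL) (lexx _)) _.
rewrite /QofX_gain -/t -/t' le_eqVlt; apply/orP; left; apply/eqP.
have -> : s' - s = (t - t') / Pmax by rewrite /t /t'; field; rewrite gt_eqF.
by field; rewrite !gt_eqF.
Qed.

End Gain.

Lemma Vgrad_supergradient K N M (Pc Pmax : R) (H : 'M[C]_(K * N, K * M))
    (X W : 'M[C]_(K * M)) :
  0 < Pc -> 0 < Pmax -> Xset X -> Xset W ->
  EE Pc H (QofX Pc Pmax W) - EE Pc H (QofX Pc Pmax X) <=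
    frobdot (Vgrad Pc Pmax H X) (W - X).
Proof.
move=> Pc0 Pm0 [_ [hX [pX tX]]] [_ [hW [pW tW]]].
have {}hX : adj X = X := hX; have {}hW : adj W = W := hW.
pose s := complex.Re (\tr X); pose s' := complex.Re (\tr W).
pose g := QofX_gain Pc Pmax s; pose g' := QofX_gain Pc Pmax s'.
pose Q := (g%:C)%C *: X; pose Q' := (g'%:C)%C *: W.
pose A := Amat H Q.
have trQ : complex.Re (\tr Q) = g * s by rewrite mxtraceZ Re_realM.
have trQ' : complex.Re (\tr Q') = g' * s' by rewrite mxtraceZ Re_realM.
have hrate : rate H Q' <= rate H Q +
    g' * complex.Re (\tr (A *m W)) - g * complex.Re (\tr (A *m X)).
  have hQ : adj Q = Q by rewrite adj_realZ hX.
  have hQ' : adj Q' = Q' by rewrite adj_realZ hW.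
  have := rate_tangent H hQ (psdZ (QofX_gain_ge0 Pc0 Pm0 tX) pX) hQ'
    (psdZ (QofX_gain_ge0 Pc0 Pm0 tW) pW).
  by rewrite mulmxBr Re_trB !Re_tr_realZr addrA.
have hWX : adj (W - X) = W - X by rewrite adjB hW hX.
have := EE_gain_tangent Pc0 Pm0 tX tW hrate.
rewrite /EE /Vgrad !QofXE -/s -/s' -/g -/g' -/Q -/Q' -/A trQ trQ'.
rewrite frobdotZl frobdotDl frobdot_hermr // frobdot_scalar_hermr //.
by rewrite mulmxBr !Re_trB Re_divr_real raddfB /= /Q Re_tr_realZr.
Qed.

End EnergyEfficiency.

Section NormalizedSet.
Variable R : realType.
Local Notation C := R[i].

Definition mx_convex m n (S : 'M[C]_(m, n) -> Prop) :=
  forall (X W : 'M[C]_(m, n)) (a : R), 0 <= a -> a <= 1 -> S X -> S W ->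
    S (X + (a%:C)%C *: (W - X)).

Lemma Xset_convex K M : mx_convex (@Xset R K M).
Proof.
move=> X W a a0 a1 [bX [hX [pX tX]]] [bW [hW [pW tW]]].
have {}hX : adj X = X := hX; have {}hW : adj W = W := hW.
have e : X + (a%:C)%C *: (W - X) = ((1 - a)%:C)%C *: X + (a%:C)%C *: W.
  apply/matrixP => i j; rewrite !mxE rmorphB rmorph1; ring.
split; first by move=> i j ij; rewrite !mxE bX // bW // subrr mulr0 addr0.
split; first by rewrite /Defs.hermitian adjD adj_realZ adjB hX hW.
split; first by rewrite e; apply: psdD; apply: psdZ; rewrite ?subr_ge0.
rewrite mxtraceD mxtraceZ raddfD /= Re_realM Re_trB.
have : a * (complex.Re (\tr W) - complex.Re (\tr X)) <= 1 - complex.Re (\tr X).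
  apply: le_trans (ler_wpM2l a0 (lerB tW (lexx _))) _.
  by rewrite ler_piMl // subr_ge0.
lra.
Qed.

Lemma Xset_diam K M (X W : 'M[C]_(K * M)) :
  Xset X -> Xset W -> frobdot (X - W) (X - W) <= 2.
Proof.
move=> [_ [hX [pX tX]]] [_ [hW [pW tW]]].
have {}hX : adj X = X := hX; have {}hW : adj W = W := hW.
have tX0 : 0 <= complex.Re (\tr X) by apply/Re_ge0/psd_mxtrace_ge0.
have tW0 : 0 <= complex.Re (\tr W) by apply/Re_ge0/psd_mxtrace_ge0.
have := frobdot_psd_le_sqr_tr hX pX; have := frobdot_psd_le_sqr_tr hW pW.
have := frobdot_psd_ge0 hX pX pW.
have : complex.Re (\tr X) ^+ 2 <= 1 by rewrite expr_le1.
have : complex.Re (\tr W) ^+ 2 <= 1 by rewrite expr_le1.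
rewrite !frobdotBl !frobdotBr (frobdotC W X); lra.
Qed.

Lemma QofX_surj K M (Pc Pmax : R) (Q : 'M[C]_(K * M)) :
  0 < Pc -> 0 < Pmax -> Qset Pmax Q ->
  exists2 W, Xset W & QofX Pc Pmax W = Q.
Proof.
move=> Pc0 Pm0 [bQ [hQ [pQ tQ]]].
have {}hQ : adj Q = Q := hQ.
set q := complex.Re (\tr Q) in tQ *.
have q0 : 0 <= q by apply/Re_ge0/psd_mxtrace_ge0.
have Pq : 0 < Pc + q by lra.
have PP : 0 < Pc + Pmax by lra.
pose k := (Pc + Pmax) / (Pmax * (Pc + q)).
have k0 : 0 < k by rewrite divr_gt0 ?mulr_gt0.
have trk : complex.Re (\tr ((k%:C)%C *: Q)) = k * q by rewrite mxtraceZ Re_realM.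
have e1 : 1 - k * q = Pc * (Pmax - q) / (Pmax * (Pc + q)).
  by rewrite /k; field; rewrite !gt_eqF.
exists ((k%:C)%C *: Q).
  split; first by move=> i j ij; rewrite !mxE bQ // mulr0.
  split; first by rewrite /Defs.hermitian adj_realZ hQ.
  split; first by apply: psdZ => //; apply: ltW.
  by rewrite trk -subr_ge0 e1 divr_ge0 // mulr_ge0 ?subr_ge0 // ltW // mulr_gt0.
rewrite QofXE trk scalerA -rmorphM /QofX_gain e1.
suff -> : Pc * Pmax / (Pc + Pmax * (Pc * (Pmax - q) / (Pmax * (Pc + q)))) * k = 1.
  by rewrite scale1r.
by rewrite /k; field; rewrite !gt_eqF //; nra.
Qed.

End NormalizedSet.

Lemma ge0_quadratic_near0 (R : realType) (g b : R) : 0 <= b ->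
  (forall a, 0 < a -> a <= 1 -> 0 <= 2 * a * g + a ^+ 2 * b) -> 0 <= g.
Proof.
move=> b0 h; rewrite leNgt; apply/negP => g0.
have bg : 0 < b - g by lra.
pose a := - g / (b - g).
have a0 : 0 < a by rewrite divr_gt0 //; lra.
have a1 : a <= 1 by rewrite ler_pdivrMr // mul1r; lra.
have ab : a * b <= - g.
  rewrite /a mulrAC ler_pdivrMr //; have gg : 0 <= g * g by rewrite -expr2 sqr_ge0.
  nra.
have := h a a0 a1.
have -> : 2 * a * g + a ^+ 2 * b = a * (2 * g + a * b) by ring.
by rewrite pmulr_rge0 //; lra.
Qed.

Section ProjectedGradient.
Variable R : realType.
Local Notation C := R[i].
Variables (m n : nat) (S : 'M[C]_(m, n) -> Prop).
Hypothesis S_convex : mx_convex S.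

Definition proj_onto (Y Z : 'M[C]_(m, n)) :=
  S Z /\ forall W, S W -> frob (Z - Y) <= frob (W - Y).

(* Optimality of [Z] along the segment from [Z] to [W] gives the variational
   inequality [<Z - Y, W - Z> >= 0]. *)
Lemma proj_onto_le (Y Z W : 'M[C]_(m, n)) : proj_onto Y Z -> S W ->
  frobdot (Z - W) (Z - W) <= frobdot (Y - W) (Y - W).
Proof.
move=> [SZ Zmin] SW.
have var : 0 <= frobdot (Z - Y) (W - Z).
  apply: (ge0_quadratic_near0 (frobdot_ge0 (W - Z))) => a a0 a1.
  have := frob_le_frobdot (Zmin _ (S_convex (ltW a0) a1 SZ SW)).
  rewrite addrAC (frobdot_sqrD (Z - Y)) !frobdotZr frobdotZl.
  have -> : a * (a * frobdot (W - Z) (W - Z)) = a ^+ 2 * frobdot (W - Z) (W - Z).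
    by rewrite expr2 mulrA.
  lra.
have -> : Y - W = (Y - Z) + (Z - W) by rewrite addrA subrK.
rewrite (frobdot_sqrD (Y - Z)) -[frobdot (Y - Z) (Z - W)]frobdotNN !opprB.
have := frobdot_ge0 (Y - Z); lra.
Qed.

Lemma proj_step_le (x x' v W : 'M[C]_(m, n)) (gamma V0 : R) :
  S W -> 0 < gamma -> frob v <= V0 ->
  proj_onto (x + (gamma%:C)%C *: v) x' ->
  frobdot v (W - x) <=
    (frobdot (x - W) (x - W) - frobdot (x' - W) (x' - W)) / (2 * gamma)
    + gamma * V0 ^+ 2 / 2.
Proof.
move=> SW g0 vV0 /proj_onto_le /(_ SW).
rewrite addrAC (frobdot_sqrD (x - W)) !frobdotZr frobdotZl.
have -> : frobdot (x - W) v = - frobdot v (W - x) by rewrite frobdotC -frobdotNr opprB.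
have V00 : 0 <= V0 := le_trans (frob_ge0 v) vV0.
have vv : gamma * (gamma * frobdot v v) <= gamma * (gamma * V0 ^+ 2).
  rewrite mulrA [X in _ <= X]mulrA ler_pM2l ?mulr_gt0 //.
  by rewrite -sqr_frob lerXn2r ?nnegrE ?frob_ge0.
have -> : (frobdot (x - W) (x - W) - frobdot (x' - W) (x' - W)) / (2 * gamma)
    + gamma * V0 ^+ 2 / 2 =
  (frobdot (x - W) (x - W) - frobdot (x' - W) (x' - W)
    + gamma * (gamma * V0 ^+ 2)) / (2 * gamma).
  by field; rewrite gt_eqF.
rewrite ler_pdivlMr ?mulr_gt0 //; lra.
Qed.

Lemma proj_iterates_in (x y : nat -> 'M[C]_(m, n)) :
  S (x 1%N) -> (forall k, (1 <= k)%N -> proj_onto (y k) (x k.+1)) ->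
  forall k, (1 <= k)%N -> S (x k).
Proof.
move=> S1 hproj; elim=> [//|[_ _|k IH _]]; first exact: S1.
by have [] := hproj k.+1 isT.
Qed.

End ProjectedGradient.

Section OnlineGradientRegret.
Variable R : realType.
Local Notation C := R[i].

Lemma sum_telescope_weighted_le (a c : nat -> R) (D : R) T : (1 <= T)%N ->
  (forall k, (1 <= k)%N -> 0 <= a k <= D) ->
  (forall k, (1 <= k)%N -> 0 <= c k <= c k.+1) ->
  \sum_(1 <= k < T.+1) (a k - a k.+1) * c k <= D * c T.
Proof.
move=> T1 ha hc.
suff strong T' : \sum_(1 <= k < T'.+2) (a k - a k.+1) * c k + a T'.+2 * c T'.+1
    <= D * c T'.+1.
  case: T T1 => // T _; have := strong T.
  have /andP[a0 _] := ha T.+2 isT; have /andP[c0 _] := hc T.+1 isT.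
  by have := mulr_ge0 a0 c0; lra.
elim: T' => [|T' IH].
  rewrite big_nat1 -mulrDl subrK.
  by have /andP[c0 _] := hc 1%N isT; have /andP[_ aD] := ha 1%N isT; rewrite ler_wpM2r.
rewrite big_nat_recr //= -addrA -mulrDl subrK.
have /andP[a0 aD] := ha T'.+2 isT; have /andP[c0 cc] := hc T'.+1 isT.
nra.
Qed.

Lemma ogd_regret m n (S : 'M[C]_(m, n) -> Prop) (D V0 : R) (gamma : nat -> R)
    (v x : nat -> 'M[C]_(m, n)) (W : 'M[C]_(m, n)) T :
  mx_convex S -> (1 <= T)%N -> S W -> S (x 1%N) ->
  (forall Y Z, S Y -> S Z -> frobdot (Y - Z) (Y - Z) <= D) ->
  (forall k, (1 <= k)%N -> 0 < gamma k) ->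
  (forall k, (1 <= k)%N -> gamma k.+1 <= gamma k) ->
  (forall k, (1 <= k)%N -> frob (v k) <= V0) ->
  (forall k, (1 <= k)%N -> proj_onto S (x k + ((gamma k)%:C)%C *: v k) (x k.+1)) ->
  \sum_(1 <= k < T.+1) frobdot (v k) (W - x k) <=
    D / (2 * gamma T) + 1 / 2 * V0 ^+ 2 * \sum_(1 <= k < T.+1) gamma k.
Proof.
move=> Sconv T1 SW S1 diam g0 gdec vV0 hproj.
have Sx := proj_iterates_in S1 hproj.
apply: (@le_trans _ _ (\sum_(1 <= k < T.+1)
    ((frobdot (x k - W) (x k - W) - frobdot (x k.+1 - W) (x k.+1 - W)) / (2 * gamma k)
     + gamma k * V0 ^+ 2 / 2))).
  apply: ler_sum_nat => k /andP[k1 _].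
  apply: (proj_step_le Sconv SW (g0 k k1) (vV0 k k1) (hproj k k1)).
rewrite big_split /= lerD //.
  apply: (sum_telescope_weighted_le (a := fun k => frobdot (x k - W) (x k - W))
    (c := fun k => (2 * gamma k)^-1)) => // k k1.
    by rewrite frobdot_ge0 /= diam //; apply: Sx.
  have gk := g0 k k1; have gk' : 0 < gamma k.+1 by apply: g0.
  by rewrite invr_ge0 mulr_ge0 ?(ltW gk) //= lef_pV2 ?posrE ?mulr_gt0 // ler_pM2l ?gdec.
rewrite mulr_sumr; apply: ler_sum_nat => k _.
by rewrite le_eqVlt; apply/orP; left; apply/eqP; ring.
Qed.

End OnlineGradientRegret.

Lemma Reg_le (R : realType) K N M (Pc Pmax : R) (H : nat -> 'M[R[i]]_(K * N, K * M))
    (Qpol : nat -> 'M[R[i]]_(K * M)) T (b : R) :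
  0 < Pc -> 0 < Pmax ->
  (forall W, Xset W -> \sum_(1 <= k < T.+1)
     (EE Pc (H k) (QofX Pc Pmax W) - EE Pc (H k) (Qpol k)) <= b) ->
  Reg Pc Pmax H Qpol T <= b.
Proof.
move=> Pc0 Pm0 hb; apply: ge_sup.
  exists (\sum_(1 <= k < T.+1) (EE Pc (H k) 0 - EE Pc (H k) (Qpol k))), 0; split=> //.
  split; first by move=> i j _; rewrite mxE.
  split; first by apply/matrixP => i j; rewrite adjE !mxE conjc0.
  split; first by move=> v; rewrite mulmx0 mul0mx mxE.
  by rewrite linear0 ltW.
by move=> _ [Q [QQ ->]]; have [W XW <-] := QofX_surj Pc0 Pm0 QQ; apply: hb.
Qed.

Section Asymptotics.
Variable R : realType.

Lemma sum_inv_sqrt_le T :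
  \sum_(1 <= k < T.+1) 1 / Num.sqrt (k%:R : R) <= 2 * Num.sqrt (T%:R : R).
Proof.
elim: T => [|T IH]; first by rewrite big_geq // sqrtr0 mulr0.
rewrite big_nat_recr //=.
set x := Num.sqrt (T%:R : R) in IH *; set y := Num.sqrt (T.+1%:R : R).
have x0 : 0 <= x by apply: sqrtr_ge0.
have y0 : 0 < y by rewrite sqrtr_gt0 ltr0n.
have exy : y ^+ 2 = x ^+ 2 + 1 by rewrite !sqr_sqrtr ?ler0n // -natr1.
suff : 1 / y <= 2 * y - 2 * x by lra.
rewrite ler_pdivrMr //; have := sqr_ge0 (x - y); move: exy; rewrite !expr2; nra.
Qed.

Lemma limn_esup_le0 (x b : nat -> R) : (forall T, (1 <= T)%N -> x T <= b T) ->
  b @ \oo --> 0 -> (limn_esup (fun T => (x T)%:E) <= 0)%E.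
Proof.
move=> xb bc.
have bE : (fun T => (b T)%:E) @ \oo --> (0 : R)%:E by apply: cvg_EFin => //; near=> T.
rewrite limn_esup_lim.
have -> : (0 : \bar R) = limn (esups (fun T => (b T)%:E)).
  by apply/esym/cvg_lim => //; apply: cvg_esups.
apply: lee_lim; [exact: is_cvg_esups | exact: is_cvg_esups |].
near=> n; apply: ge_ereal_sup => _ [k /= nk <-].
apply: (@le_trans _ _ (b k)%:E); last by apply: ereal_sup_ubound; exists k.
by rewrite lee_fin xb //; apply: leq_trans nk; near: n; exists 1%N.
Unshelve. all: by end_near. Qed.

Lemma ogd_bound_avg_cvg0 (gamma : nat -> R) (c : R) :
  (forall k, (1 <= k)%N -> 0 < gamma k) ->
  gamma @ \oo --> 0 -> (fun k => k%:R * gamma k) @ \oo --> +oo ->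
  (fun T => (1 / gamma T + c * \sum_(1 <= k < T.+1) gamma k) / T%:R) @ \oo --> 0.
Proof.
move=> g0 gcvg ginf.
have inv_cvg : (fun T => (T%:R * gamma T)^-1) @ \oo --> (0 : R).
  apply/gtr0_cvgV0 => //; near=> T; apply: mulr_gt0.
    by rewrite ltr0n; near: T; exists 1%N.
  by apply: g0; near: T; exists 1%N.
have avg_cvg : (fun T => (\sum_(1 <= k < T.+1) gamma k) / T%:R) @ \oo --> (0 : R).
  rewrite -cvg_shiftS.
  have mean : arithmetic_mean (fun k => gamma k.+1) =1
      (fun T => (\sum_(1 <= k < T.+2) gamma k) / T.+1%:R).
    by move=> T; rewrite /arithmetic_mean /series /= mulrC big_add1.
  by rewrite -(eq_cvg _ _ mean); apply: cesaro; rewrite cvg_shiftS.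
have -> : (fun T => (1 / gamma T + c * \sum_(1 <= k < T.+1) gamma k) / T%:R) =
    (fun T => (T%:R * gamma T)^-1 + c * ((\sum_(1 <= k < T.+1) gamma k) / T%:R)).
  by apply: funext => T; rewrite mulrDl invfM div1r mulrC mulrA.
by have := cvgD inv_cvg (cvgM (cvg_cst c) avg_cvg); rewrite mulr0 addr0; apply.
Unshelve. all: by end_near. Qed.

Lemma ogd_bound_inv_sqrt (g V0 : R) T : 0 < g -> (1 <= T)%N ->
  1 / (g / Num.sqrt (T%:R : R)) +
    1 / 2 * V0 ^+ 2 * \sum_(1 <= k < T.+1) g / Num.sqrt (k%:R : R) <=
  (1 + g ^+ 2 * V0 ^+ 2) / g * Num.sqrt (T%:R : R).
Proof.
move=> g0 T1; have sT : 0 < Num.sqrt (T%:R : R) by rewrite sqrtr_gt0 ltr0n.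
have -> : \sum_(1 <= k < T.+1) g / Num.sqrt (k%:R : R) =
    g * \sum_(1 <= k < T.+1) 1 / Num.sqrt (k%:R : R).
  by rewrite mulr_sumr; apply: eq_bigr => k _; rewrite mulrA mulr1.
have -> : (1 + g ^+ 2 * V0 ^+ 2) / g * Num.sqrt (T%:R : R) =
    1 / (g / Num.sqrt (T%:R : R)) + 1 / 2 * V0 ^+ 2 * (g * (2 * Num.sqrt (T%:R : R))).
  by field; rewrite !gt_eqF.
rewrite lerD2l; apply: ler_wpM2l; first by rewrite mulr_ge0 ?sqr_ge0.
by rewrite ler_pM2l // sum_inv_sqrt_le.
Qed.

End Asymptotics.

Unset Implicit Arguments.

Theorem theorem1 (R : realType) (K M N : nat) (Pc Pmax V0 : R)
  (H : nat -> 'M[R[i]]_(K * N, K * M))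
  (gamma : nat -> R) (X : nat -> 'M[R[i]]_(K * M)) :
  (1 <= K)%N -> (1 <= M)%N -> (1 <= N)%N ->
  0 < Pc -> 0 < Pmax -> 0 < V0 ->
  (forall n, (1 <= n)%N -> blockdiag (H n)) ->
  (forall n, (1 <= n)%N -> frob (Vgrad Pc Pmax (H n) (X n)) <= V0) ->
  (forall n, (1 <= n)%N -> 0 < gamma n) ->
  (forall n, (1 <= n)%N -> gamma n.+1 <= gamma n) ->
  gamma @ \oo --> (0 : R) ->
  (fun n => n%:R * gamma n) @ \oo --> +oo ->
  Xset (X 1%N) ->
  (forall n, (1 <= n)%N ->
     is_proj (X n + ((gamma n)%:C)%C *: Vgrad Pc Pmax (H n) (X n)) (X n.+1)) ->
  let Qpol := fun n => QofX Pc Pmax (X n) in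
  [/\ (limn_esup (fun T => ((Reg Pc Pmax H Qpol T) / T%:R)%:E) <= 0)%E,
      (forall T, (1 <= T)%N ->
         Reg Pc Pmax H Qpol T <=
           1 / gamma T + 1 / 2 * V0 ^+ 2 * \sum_(1 <= n < T.+1) gamma n) &
      (forall g : R, 0 < g -> (forall n, (1 <= n)%N -> gamma n = g / Num.sqrt n%:R) ->
       forall T, (1 <= T)%N ->
         Reg Pc Pmax H Qpol T <= (1 + g ^+ 2 * V0 ^+ 2) / g * Num.sqrt T%:R)].
Proof.
move=> _ _ _ Pc0 Pm0 _ _ hV g0 gdec gcvg ginf X1 hproj Qpol.
have XX := proj_iterates_in X1 hproj.
have regret T : (1 <= T)%N ->
    Reg Pc Pmax H Qpol T <= 1 / gamma T + 1 / 2 * V0 ^+ 2 * \sum_(1 <= n < T.+1) gamma n.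
  move=> T1; apply: Reg_le => // W XW.
  have := ogd_regret (@Xset_convex R K M) T1 XW X1 (@Xset_diam R K M) g0 gdec hV hproj.
  have -> : 2 / (2 * gamma T) = 1 / gamma T by field; rewrite gt_eqF ?g0.
  apply: le_trans; apply: ler_sum_nat => n /andP[n1 _].
  exact: Vgrad_supergradient (XX n n1) XW.
split=> [||g g0' hg T T1]; first 2 last.
- apply: le_trans (regret T T1) _.
  have -> : \sum_(1 <= n < T.+1) gamma n = \sum_(1 <= n < T.+1) g / Num.sqrt n%:R.
    by apply: eq_big_nat => n /andP[n1 _]; apply: hg.
  by rewrite hg // ogd_bound_inv_sqrt.
- apply: (@limn_esup_le0 _ _
    (fun T => (1 / gamma T + 1 / 2 * V0 ^+ 2 * \sum_(1 <= n < T.+1) gamma n) / T%:R)).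
    by move=> T T1; rewrite ler_wpM2r ?invr_ge0 ?ler0n ?regret.
  exact: ogd_bound_avg_cvg0.
- exact: regret.
Qed.
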